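(* Let $\Phi$ be a real $N\times d$ matrix satisfying the Restricted Isometry Condition with parameters $(2n,\varepsilon)$, $\varepsilon = 0.03/\sqrt{\log n}$, let $v \ne 0$ be $n$-sparse, $x = \Phi v$, and consider an iteration of ROMP run on $x$ with sparsity level $n$, with $I$ the index set and $r\ne0$ the residual at the start of that iteration, $u = \Phi^* r$, and $J_0$ the set chosen in the regularization step of that iteration. Let $v_0 = v|_{\mathrm{supp}(v)\setminus I}$ (equal to $v$ on $\mathrm{supp}(v)\setminus I$, $0$ elsewhere). Then $\|u|_{J_0}\|_2 \ge \frac{0.32}{\sqrt{\log n}}\,\|v_0\|_2$.
   Context: A vector is $n$-sparse if it has at most $n$ nonzero coordinates. $\Phi$ satisfies the Restricted Isometry Condition with parameters $(m,\varepsilon)$ if $(1-\varepsilon)\|w\|_2 \le \|\Phi w\|_2 \le (1+\varepsilon)\|w\|_2$ for all $m$-sparse $w$. $y|_T$ is the restriction of $y$ to coordinates in $T$. ROMP with input $x$ and sparsity level $n$: Initialize $I=\emptyset$, $r=x$. Repeat until $r=0$: (Identify) $u=\Phi^*r$, choose a set $J$ of the $n$ biggest coordinates of $u$ in magnitude, or all nonzero coordinates of $u$, whichever set is smaller; (Regularize) among subsets $J_0\subset J$ with $|u(i)|\le 2|u(j)|$ for all $i,j\in J_0$, choose one maximizing $\|u|_{J_0}\|_2$; (Update) $I\leftarrow I\cup J_0$, $y=\operatorname{argmin}_{z\in\mathbb{R}^I}\|x-\Phi z\|_2$, $r=x-\Phi y$. Output $I$. *)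

From HB Require Import structures.
From mathcomp Require Import all_boot all_order all_algebra.
From mathcomp Require Import reals exp.
Set Implicit Arguments. Unset Strict Implicit. Unset Printing Implicit Defensive.
Import Order.TTheory GRing.Theory Num.Theory.
Local Open Scope ring_scope.

Section ROMP.
Variable R : realType.

Definition norm2 k (w : 'cV[R]_k) : R := Num.sqrt (\sum_(i < k) w i 0 ^+ 2).

Definition supp k (w : 'cV[R]_k) : {set 'I_k} := [set i | w i 0 != 0].

Definition restrict k (T : {set 'I_k}) (w : 'cV[R]_k) : 'cV[R]_k :=
  \col_i (if i \in T then w i 0 else 0).

Definition sparse k (m : nat) (w : 'cV[R]_k) : Prop := (#|supp w| <= m)%N.

Definition RIC N d (Phi : 'M[R]_(N, d)) (m : nat) (eps : R) : Prop :=
  forall w : 'cV[R]_d, sparse m w ->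
    (1 - eps) * norm2 w <= norm2 (Phi *m w) /\
    norm2 (Phi *m w) <= (1 + eps) * norm2 w.

Definition romp_identify d (n : nat) (u : 'cV[R]_d) (J : {set 'I_d}) : Prop :=
  #|J| = minn n #|supp u| /\ J \subset supp u /\
  (forall i j, i \in J -> j \notin J -> `|u j 0| <= `|u i 0|).

Definition comparable_on d (u : 'cV[R]_d) (J0 : {set 'I_d}) : Prop :=
  forall i j, i \in J0 -> j \in J0 -> `|u i 0| <= 2 * `|u j 0|.

Definition romp_regularize d (u : 'cV[R]_d) (J J0 : {set 'I_d}) : Prop :=
  J0 \subset J /\ comparable_on u J0 /\
  (forall J1 : {set 'I_d}, J1 \subset J -> comparable_on u J1 ->
     norm2 (restrict J1 u) <= norm2 (restrict J0 u)).

Definition romp_update N d (Phi : 'M[R]_(N, d)) (x : 'cV[R]_N)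
    (I J0 I' : {set 'I_d}) (r' : 'cV[R]_N) : Prop :=
  I' = I :|: J0 /\
  exists y : 'cV[R]_d, supp y \subset I' /\
    (forall z : 'cV[R]_d, supp z \subset I' ->
       norm2 (x - Phi *m y) <= norm2 (x - Phi *m z)) /\
    r' = x - Phi *m y.

Definition romp_step N d (Phi : 'M[R]_(N, d)) (n : nat) (x : 'cV[R]_N)
    (I : {set 'I_d}) (r : 'cV[R]_N) (I' : {set 'I_d}) (r' : 'cV[R]_N) : Prop :=
  r <> 0 /\
  exists J J0 : {set 'I_d},
    romp_identify n (Phi^T *m r) J /\
    romp_regularize (Phi^T *m r) J J0 /\
    romp_update Phi x I J0 I' r'.

Inductive romp_reach N d (Phi : 'M[R]_(N, d)) (n : nat) (x : 'cV[R]_N) :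
    {set 'I_d} -> 'cV[R]_N -> Prop :=
| romp_reach0 : romp_reach Phi n x set0 x
| romp_reachS I r I' r' :
    romp_reach Phi n x I r -> romp_step Phi n x I r I' r' ->
    romp_reach Phi n x I' r'.

End ROMP.

From HB Require Import structures.
From mathcomp Require Import all_boot all_order all_algebra.
From mathcomp Require Import reals exp.
From mathcomp Require Import lra ring.
Import Order.TTheory GRing.Theory Num.Theory.
Set Implicit Arguments. Unset Strict Implicit. Unset Printing Implicit Defensive.
Local Open Scope ring_scope.

(* Write S = supp v and v0 = v|_(S \ I).  By the least-squares step, every
   residual met by ROMP has the form r = Phi (v0 - z) with z supported on I,
   and u = Phi^T r vanishes on I.  If moreover at most half of I lies outside S,
   then v0 - z is 2n-sparse and <v0, u> = |r|^2 >= (1 - e)^2 |v0|^2, so by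
   Cauchy-Schwarz the n-sparse set S \ I carries energy >= (1 - e)^4 |v0|^2 of
   u.  The identification step keeps at least this energy in J, and cutting J
   into K ~ log n dyadic bands of comparable coordinates shows that the maximal
   comparable set J0 keeps a 1/K fraction of it.  The "half of I" invariant is
   preserved because coordinates of J0 outside S are nearly orthogonal to v0,
   hence carry little energy, while all coordinates of J0 are comparable. *)

Lemma ler_wpM2l_cancel (R : numDomainType) (x a b : R) :
  0 <= x -> (x = 0 -> a <= b) -> x * a <= x * b -> a <= b.
Proof.
rewrite le_eqVlt => /orP [/eqP x0 /(_ (esym x0)) // | x_gt0 _].
by rewrite ler_pM2l.
Qed.

Lemma disjoint_setDl (T : finType) (A B : {set T}) : [disjoint A :\: B & B].
Proof. by rewrite disjoints_subset setDE subsetIr. Qed.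

Section InnerProduct.
Variable R : realType.
Implicit Types (k : nat).

Definition dot k (a b : 'cV[R]_k) : R := \sum_i a i 0 * b i 0.

Lemma dotC k (a b : 'cV[R]_k) : dot a b = dot b a.
Proof. by apply: eq_bigr => i _; rewrite mulrC. Qed.

Lemma dotDl k (a b c : 'cV[R]_k) : dot (a + b) c = dot a c + dot b c.
Proof. by rewrite /dot -big_split; apply: eq_bigr => i _; rewrite !mxE mulrDl. Qed.

Lemma dotNl k (a c : 'cV[R]_k) : dot (- a) c = - dot a c.
Proof. by rewrite /dot -sumrN; apply: eq_bigr => i _; rewrite !mxE mulNr. Qed.

Lemma dotZl k (s : R) (a c : 'cV[R]_k) : dot (s *: a) c = s * dot a c.
Proof. by rewrite /dot mulr_sumr; apply: eq_bigr => i _; rewrite !mxE mulrA. Qed.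

Lemma dotDr k (a b c : 'cV[R]_k) : dot c (a + b) = dot c a + dot c b.
Proof. by rewrite dotC dotDl !(dotC c). Qed.

Lemma dotNr k (a c : 'cV[R]_k) : dot c (- a) = - dot c a.
Proof. by rewrite dotC dotNl dotC. Qed.

Lemma dotZr k (s : R) (a c : 'cV[R]_k) : dot c (s *: a) = s * dot c a.
Proof. by rewrite dotC dotZl dotC. Qed.

Lemma dotDZ k (s t : R) (a b : 'cV[R]_k) :
  dot (s *: a + t *: b) (s *: a + t *: b) =
    s ^+ 2 * dot a a + 2 * s * t * dot a b + t ^+ 2 * dot b b.
Proof. by rewrite !(dotDl, dotDr, dotZl, dotZr) (dotC b a); ring. Qed.

Lemma dot0l k (a : 'cV[R]_k) : dot 0 a = 0.
Proof. by rewrite -(scale0r 0) dotZl mul0r. Qed.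

Lemma dot0r k (a : 'cV[R]_k) : dot a 0 = 0.
Proof. by rewrite dotC dot0l. Qed.

Lemma dot_mulmx N d (Phi : 'M[R]_(N, d)) (a : 'cV[R]_d) (b : 'cV[R]_N) :
  dot (Phi *m a) b = dot a (Phi^T *m b).
Proof.
rewrite /dot; under eq_bigr do rewrite !mxE big_distrl.
rewrite exchange_big; apply: eq_bigr => j _ /=.
by rewrite !mxE big_distrr; apply: eq_bigr => i _; rewrite !mxE /=; ring.
Qed.

Lemma dot_delta k (i : 'I_k) (a : 'cV[R]_k) : dot (delta_mx i 0) a = a i 0.
Proof.
rewrite /dot (bigD1 i) //= big1 => [|j /negbTE ji]; rewrite !mxE ?eqxx ?mul1r ?addr0 //.
by rewrite ji mul0r.
Qed.

Lemma dot_ge0 k (a : 'cV[R]_k) : 0 <= dot a a.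
Proof. by apply: sumr_ge0 => i _; rewrite -expr2 sqr_ge0. Qed.

Lemma norm2_sqr k (a : 'cV[R]_k) : norm2 a ^+ 2 = dot a a.
Proof.
rewrite /norm2 sqr_sqrtr; last by apply: sumr_ge0 => i _; rewrite sqr_ge0.
by apply: eq_bigr => i _; rewrite expr2.
Qed.

Lemma norm2_ge0 k (a : 'cV[R]_k) : 0 <= norm2 a.
Proof. exact: sqrtr_ge0. Qed.

Lemma dot_self_eq0 k (a : 'cV[R]_k) : dot a a = 0 -> a = 0.
Proof.
move=> a0; apply/matrixP => i j; rewrite ord1 mxE; apply/eqP; rewrite -sqrf_eq0.
rewrite eq_le sqr_ge0 andbT -a0 /dot (bigD1 i) //= expr2 lerDl.
by apply: sumr_ge0 => l _; rewrite -expr2 sqr_ge0.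
Qed.

Lemma norm2_eq0 k (a : 'cV[R]_k) : norm2 a = 0 -> a = 0.
Proof. by move=> a0; apply: dot_self_eq0; rewrite -norm2_sqr a0 expr0n. Qed.

(* Cauchy--Schwarz, from the positivity of |b| a -+ |a| b. *)
Lemma dot_le_norm2 k (a b : 'cV[R]_k) : `|dot a b| <= norm2 a * norm2 b.
Proof.
set al := norm2 a; set be := norm2 b.
have al0 : 0 <= al := norm2_ge0 a; have be0 : 0 <= be := norm2_ge0 b.
apply: (ler_wpM2l_cancel (x := al * be)); first exact: mulr_ge0.
  by move/eqP; rewrite mulf_eq0 => /orP [] /eqP /norm2_eq0 ->;
     rewrite ?dot0l ?dot0r normr0 mulr_ge0.
have := dot_ge0 (be *: a + al *: b); have := dot_ge0 (be *: a + (- al) *: b).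
rewrite !dotDZ -!norm2_sqr -/al -/be.
have [g0|g0] := lerP 0 (dot a b); [rewrite ger0_norm | rewrite ltr0_norm]; nra.
Qed.

End InnerProduct.

Section Supports.
Variable R : realType.
Implicit Types (k : nat).

Lemma in_supp k (w : 'cV[R]_k) i : (i \in supp w) = (w i 0 != 0).
Proof. by rewrite inE. Qed.

Lemma supp_subP k (w : 'cV[R]_k) (A : {set 'I_k}) :
  reflect (forall i, i \notin A -> w i 0 = 0) (supp w \subset A).
Proof.
apply: (iffP subsetP) => [sA i | w0 i]; last by rewrite in_supp; apply: contraR => /w0 ->.
by apply: contraNeq; rewrite -in_supp => /sA.
Qed.

Lemma supp_delta k (i : 'I_k) : supp (delta_mx i 0 : 'cV[R]_k) \subset [set i].
Proof. by apply/supp_subP => j; rewrite inE mxE => /negbTE ->. Qed.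

Lemma supp_restrict k (A : {set 'I_k}) (w : 'cV[R]_k) : supp (restrict A w) \subset A.
Proof. by apply/supp_subP => i /negbTE iA; rewrite mxE iA. Qed.

Lemma supp_D k (a b : 'cV[R]_k) (A : {set 'I_k}) :
  supp a \subset A -> supp b \subset A -> supp (a + b) \subset A.
Proof.
move=> /supp_subP a0 /supp_subP b0; apply/supp_subP => i iA.
by rewrite mxE a0 ?b0 ?addr0.
Qed.

Lemma supp_Z k (s : R) (a : 'cV[R]_k) (A : {set 'I_k}) :
  supp a \subset A -> supp (s *: a) \subset A.
Proof. by move=> /supp_subP a0; apply/supp_subP => i iA; rewrite mxE a0 ?mulr0. Qed.

Lemma supp_B k (a b : 'cV[R]_k) (A : {set 'I_k}) :
  supp a \subset A -> supp b \subset A -> supp (a - b) \subset A.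
Proof. by move=> sa sb; rewrite -scaleN1r; apply/supp_D/supp_Z. Qed.

Lemma sparse_subset k m (w : 'cV[R]_k) (A : {set 'I_k}) :
  supp w \subset A -> (#|A| <= m)%N -> sparse m w.
Proof. by move=> /subset_leq_card; apply: leq_trans. Qed.

Lemma dot_supp_disjoint k (a b : 'cV[R]_k) (A B : {set 'I_k}) :
  supp a \subset A -> supp b \subset B -> [disjoint A & B] -> dot a b = 0.
Proof.
move=> /supp_subP a0 /supp_subP b0 AB; rewrite /dot big1 // => i _.
have [iA|iA] := boolP (i \in A); last by rewrite a0 ?mul0r.
by rewrite b0 ?mulr0 ?(disjointFr AB iA).
Qed.

Definition energy k (u : 'cV[R]_k) (A : {set 'I_k}) : R := \sum_(i in A) u i 0 ^+ 2.

Lemma energy_ge0 k (u : 'cV[R]_k) A : 0 <= energy u A.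
Proof. by apply: sumr_ge0 => i _; rewrite sqr_ge0. Qed.

Lemma energy1 k (u : 'cV[R]_k) i : energy u [set i] = u i 0 ^+ 2.
Proof. exact: big_set1. Qed.

Lemma energy_setID k (u : 'cV[R]_k) (A B : {set 'I_k}) :
  energy u A = energy u (A :&: B) + energy u (A :\: B).
Proof. exact: big_setID. Qed.

Lemma energy_subset k (u : 'cV[R]_k) (A B : {set 'I_k}) :
  A \subset B -> energy u A <= energy u B.
Proof. by move=> AB; rewrite (energy_setID u B A) (setIidPr AB) lerDl energy_ge0. Qed.

Lemma energy_setU_le k (u : 'cV[R]_k) (A B : {set 'I_k}) :
  energy u (A :|: B) <= energy u A + energy u B.
Proof.
rewrite (energy_setID u _ A) setUK setDUl setDv set0U lerD2l.
exact/energy_subset/subsetDl.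
Qed.

Lemma energy_bigcup_le k K (u : 'cV[R]_k) (A : 'I_K -> {set 'I_k}) :
  energy u (\bigcup_(j < K) A j) <= \sum_(j < K) energy u (A j).
Proof.
elim: K A => [|K IH] A; first by rewrite !big_ord0 /energy big_set0.
rewrite !big_ord_recr /=; apply: le_trans (energy_setU_le _ _ _) _.
by rewrite lerD2r IH.
Qed.

Lemma dot_restrict k (A : {set 'I_k}) (u : 'cV[R]_k) : dot (restrict A u) u = energy u A.
Proof.
rewrite /dot /energy [RHS]big_mkcond; apply: eq_bigr => i _.
by rewrite mxE; case: (i \in A); rewrite ?mul0r ?expr2.
Qed.

Lemma norm2_restrict k (A : {set 'I_k}) (u : 'cV[R]_k) :
  norm2 (restrict A u) ^+ 2 = energy u A.
Proof.
rewrite norm2_sqr -dot_restrict; apply: eq_bigr => i _.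
by rewrite mxE; case: (i \in A); rewrite ?mul0r.
Qed.

Lemma dot_restrictr k (A : {set 'I_k}) (a u : 'cV[R]_k) :
  supp a \subset A -> dot a u = dot a (restrict A u).
Proof.
move=> /supp_subP a0; apply: eq_bigr => i _; rewrite mxE.
by case: ifPn => // /a0 ->; rewrite !mul0r.
Qed.

End Supports.

Section RestrictedIsometry.
Variable R : realType.
Variables (N d m : nat) (Phi : 'M[R]_(N, d)) (e : R).
Hypotheses (hric : RIC Phi m e) (e_ge0 : 0 <= e) (e_le1 : e <= 1).

Lemma ric_dot (w : 'cV[R]_d) : sparse m w ->
  (1 - e) ^+ 2 * dot w w <= dot (Phi *m w) (Phi *m w) <= (1 + e) ^+ 2 * dot w w.
Proof.
move=> /hric [lo hi]; have w0 := norm2_ge0 w.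
rewrite -!norm2_sqr -!exprMn !ler_sqr ?lo ?hi ?nnegrE ?norm2_ge0 //;
  by apply: mulr_ge0; rewrite // ?subr_ge0 ?addr_ge0.
Qed.

(* Polarization: compare |Phi (|b| a + |a| b)|^2 and |Phi (|b| a - |a| b)|^2. *)
Lemma ric_dot_disjoint (a b : 'cV[R]_d) (A B : {set 'I_d}) :
  supp a \subset A -> supp b \subset B -> [disjoint A & B] -> (#|A :|: B| <= m)%N ->
  dot (Phi *m a) (Phi *m b) <= 2 * e * norm2 a * norm2 b.
Proof.
move=> sa sb AB ABm; set al := norm2 a; set be := norm2 b.
have al0 : 0 <= al := norm2_ge0 a; have be0 : 0 <= be := norm2_ge0 b.
have ab0 : dot a b = 0 := dot_supp_disjoint sa sb AB.
have sAB (s t : R) : sparse m (s *: a + t *: b).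
  apply: sparse_subset ABm; apply: supp_D; apply: supp_Z.
    exact: subset_trans sa (subsetUl _ _).
  exact: subset_trans sb (subsetUr _ _).
have /andP [_ hp] := ric_dot (sAB be al).
have /andP [hm _] := ric_dot (sAB be (- al)).
rewrite !mulmxDr -!scalemxAr !dotDZ ab0 -!norm2_sqr -/al -/be in hp hm.
rewrite -mulrA; apply: (ler_wpM2l_cancel (x := al * be)); first exact: mulr_ge0.
  by move/eqP; rewrite mulf_eq0 => /orP [] /eqP /norm2_eq0 ->;
     rewrite mulmx0 ?dot0l ?dot0r !mulr_ge0.
nra.
Qed.

End RestrictedIsometry.

(* The minimality of y, tested against y + t a with t = <Phi a, r> / (|Phi a|^2 + 1). *)
Lemma least_squares_orthogonal (R : realType) N d (Phi : 'M[R]_(N, d)) (x : 'cV[R]_N)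
    (I : {set 'I_d}) (y : 'cV[R]_d) :
  supp y \subset I ->
  (forall z : 'cV[R]_d, supp z \subset I -> norm2 (x - Phi *m y) <= norm2 (x - Phi *m z)) ->
  forall a, supp a \subset I -> dot (Phi *m a) (x - Phi *m y) = 0.
Proof.
move=> sy ymin a sa; set r := x - Phi *m y.
set g := dot (Phi *m a) r; set q := dot (Phi *m a) (Phi *m a).
have q0 : 0 <= q := dot_ge0 _.
set t := g / (q + 1); have tq : t * (q + 1) = g by rewrite divfK // gt_eqF // ltr_wpDl.
have := ymin (y + t *: a) (supp_D sy (supp_Z _ sa)).
have -> : x - Phi *m (y + t *: a) = 1 *: r + (- t) *: (Phi *m a).
  by rewrite scale1r scaleNr mulmxDr -scalemxAr opprD addrA.
rewrite -ler_sqr ?nnegrE ?norm2_ge0 // !norm2_sqr dotDZ (dotC r) -/g -/q => h.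
have t0 : t = 0 by apply/eqP; rewrite -sqrf_eq0 eq_le sqr_ge0 andbT; nra.
by rewrite -tq t0 mul0r.
Qed.

Section Selection.
Variable R : realType.
Implicit Types (d n K : nat).

Lemma ler_sqr_norm (x y : R) : `|x| <= `|y| -> x ^+ 2 <= y ^+ 2.
Proof. by rewrite -(real_normK (num_real x)) -(real_normK (num_real y)) ler_sqr ?nnegrE. Qed.

Lemma ler_sum_card (T : finType) (f g : T -> R) (A B : {set T}) :
  (forall i j, i \in A -> j \in B -> f i <= g j) -> (#|A| <= #|B|)%N ->
  (forall j, j \in B -> 0 <= g j) ->
  \sum_(i in A) f i <= \sum_(j in B) g j.
Proof.
move=> fg AB g0; apply: (ler_wpM2l_cancel (x := #|B|%:R)) => //.
  move/eqP; rewrite pnatr_eq0 cards_eq0 => /eqP B0.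
  by move: AB; rewrite B0 cards0 leqn0 cards_eq0 => /eqP ->; rewrite !big_set0.
rewrite mulr_natl -sumr_const.
apply: le_trans (_ : \sum_(j in B) (#|A|%:R * g j) <= _).
  by apply: ler_sum => j jB; rewrite mulr_natl -sumr_const; apply: ler_sum => i iA; apply: fg.
by rewrite -mulr_sumr ler_wpM2r ?ler_nat // sumr_ge0.
Qed.

Lemma identify_card d n (u : 'cV[R]_d) J : romp_identify n u J -> (#|J| <= n)%N.
Proof. by case=> -> _; apply: geq_minl. Qed.

Lemma identify_energy d n (u : 'cV[R]_d) J (T : {set 'I_d}) :
  romp_identify n u J -> (#|T| <= n)%N -> energy u T <= energy u J.
Proof.
case=> [cardJ [Jsupp Jtop]] Tn.
rewrite (energy_setID u T J) (energy_setID u J T) setIC lerD2l.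
have [nsupp|suppn] := leqP n #|supp u|.
  apply: ler_sum_card => [i j|| j _]; last exact: sqr_ge0.
    by rewrite !inE => /andP [iJ _] /andP [jT jJ]; apply/ler_sqr_norm/Jtop.
  rewrite -(leq_add2l #|T :&: J|) cardsID setIC cardsID (minn_idPl nsupp) in cardJ *.
  by rewrite cardJ.
have JE : J = supp u.
  by apply/eqP; rewrite eqEcard Jsupp cardJ (minn_idPr (ltnW suppn)) leqnn.
have -> : energy u (T :\: J) = 0.
  by apply: big1 => i; rewrite JE !inE negbK => /andP [/eqP -> _]; rewrite expr0n.
exact: energy_ge0.
Qed.

Lemma regularize_max d (u : 'cV[R]_d) (J J0 J1 : {set 'I_d}) :
  romp_regularize u J J0 -> J1 \subset J -> comparable_on u J1 ->
  energy u J1 <= energy u J0.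
Proof.
case=> _ [_ J0max] J1J J1cmp; rewrite -!norm2_restrict ler_sqr ?nnegrE ?norm2_ge0 //.
exact: J0max.
Qed.

Lemma dyadic_cover (M x : R) K : x <= M ->
  x <= M / 2 ^+ K \/ exists2 k, (k < K)%N & M / 2 ^+ k.+1 < x <= M / 2 ^+ k.
Proof.
move=> xM; elim: K => [|K [xK|[k kK xk]]]; first by left; rewrite expr0 divr1.
  by have [xK1|xK1] := leP x (M / 2 ^+ K.+1); [left | right; exists K; rewrite ?xK1].
by right; exists k => //; apply: ltnW.
Qed.

Lemma energy_le_card d (u : 'cV[R]_d) (A : {set 'I_d}) (c : R) :
  (forall i, i \in A -> `|u i 0| <= c) -> energy u A <= #|A|%:R * c ^+ 2.
Proof.
move=> uc; rewrite mulr_natl -sumr_const; apply: ler_sum => i /uc ui.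
by apply: ler_sqr_norm; rewrite (ger0_norm (le_trans (normr_ge0 _) ui)).
Qed.

Lemma comparable_dyadic d (u : 'cV[R]_d) (A : {set 'I_d}) (M : R) k :
  comparable_on u [set i in A | M / 2 ^+ k.+1 < `|u i 0| <= M / 2 ^+ k].
Proof.
move=> i j; rewrite !inE => /and3P [_ _ ik] /and3P [_ jk _]; apply: le_trans ik _.
have -> : M / 2 ^+ k = 2 * (M / 2 ^+ k.+1).
  by rewrite exprS; field; rewrite expf_neq0 // pnatr_eq0.
by rewrite ler_wpM2l // ltW.
Qed.

(* Split J into the dyadic bands (M/2^(k+1), M/2^k], k < K, of |u|, with
   M^2 = energy u J: each band is comparable, and the coordinates below M/2^K
   carry at most n M^2 / 4^K <= energy u J / 4. *)
Lemma regularize_energy d n (u : 'cV[R]_d) (J J0 : {set 'I_d}) K :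
  romp_identify n u J -> romp_regularize u J J0 -> (4 * n <= 4 ^ K)%N ->
  3 * energy u J <= 4 * K%:R * energy u J0.
Proof.
move=> hJ hJ0 nK; set EJ := energy u J; set M := Num.sqrt EJ.
have M2 : M ^+ 2 = EJ by rewrite sqr_sqrtr ?energy_ge0.
pose band k := [set i in J | M / 2 ^+ k.+1 < `|u i 0| <= M / 2 ^+ k].
pose tail := [set i in J | `|u i 0| <= M / 2 ^+ K].
have tailE : energy u tail <= EJ / 4.
  have tail_n : (#|tail| <= n)%N.
    apply: leq_trans (identify_card hJ) ; apply/subset_leq_card/subsetP => i.
    by rewrite inE => /andP [].
  apply: le_trans (energy_le_card (c := M / 2 ^+ K) _) _ => [i|]; first by rewrite inE => /andP [].
  rewrite expr_div_n M2 -exprM mulnC exprM (_ : (2 : R) ^+ 2 = 4); last by rewrite expr2 -natrM.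
  rewrite mulrA ler_pdivrMr ?exprn_gt0 // mulrC -mulrA ler_wpM2l ?energy_ge0 //.
  rewrite mulrC ler_pdivlMr // -natrX -natrM ler_nat.
  by apply: leq_trans nK; rewrite mulnC leq_mul2l tail_n orbT.
have cover : J \subset tail :|: \bigcup_(k < K) band k.
  apply/subsetP => i iJ; have uiM : `|u i 0| <= M.
    rewrite -ler_sqr ?nnegrE ?sqrtr_ge0 // M2 real_normK ?num_real //.
    by rewrite -energy1 energy_subset ?sub1set.
  rewrite !inE; have [iK|[k kK ik]] := dyadic_cover K uiM; first by rewrite iJ iK.
  by apply/orP; right; apply/bigcupP; exists (Ordinal kK); rewrite // inE iJ.
have : EJ <= EJ / 4 + K%:R * energy u J0.
  apply: le_trans (energy_subset u cover) _; apply: le_trans (energy_setU_le _ _ _) _.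
  apply: lerD => //; apply: le_trans (energy_bigcup_le _ _) _.
  apply: le_trans (_ : \sum_(k < K) energy u J0 <= _).
    apply: ler_sum => k _; apply: (regularize_max hJ0); last exact: comparable_dyadic.
    by apply/subsetP => i; rewrite inE => /andP [].
  by rewrite sumr_const card_ord mulr_natl.
lra.
Qed.

Lemma comparable_card_le d (u : 'cV[R]_d) (C A B : {set 'I_d}) :
  comparable_on u C -> A \subset C -> B \subset C -> A \subset supp u ->
  4 * energy u A <= energy u B -> (#|A| <= #|B|)%N.
Proof.
move=> cmp /subsetP AC /subsetP BC Au AB; rewrite -(ler_nat R).
apply: (ler_wpM2l_cancel (x := 4 * energy u A)); first by rewrite mulr_ge0 ?energy_ge0.
  move/eqP; rewrite mulf_eq0 pnatr_eq0 /= => /eqP EA0.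
  suff -> : A = set0 by rewrite cards0.
  apply/eqP; rewrite -subset0; apply/subsetP => i iA.
  have : u i 0 ^+ 2 <= 0 by rewrite -EA0 -energy1 energy_subset ?sub1set.
  by have := subsetP Au i iA; rewrite in_supp -sqrf_eq0 eq_le sqr_ge0 andbT => /negbTE ->.
apply: le_trans (_ : #|A|%:R * energy u B <= _); first by rewrite mulrC ler_wpM2l.
have -> : #|A|%:R * energy u B = \sum_(i in A) \sum_(j in B) u j 0 ^+ 2.
  by rewrite sumr_const mulr_natl.
have -> : 4 * energy u A * #|B|%:R = \sum_(i in A) \sum_(j in B) 4 * u i 0 ^+ 2.
  by rewrite /energy mulr_sumr mulr_suml; apply: eq_bigr => i _; rewrite sumr_const mulr_natr.
apply: ler_sum => i iA; apply: ler_sum => j jB.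
have := @ler_sqr_norm (u j 0) (2 * u i 0); rewrite normrM ger0_norm //.
move=> /(_ (cmp j i (BC j jB) (AC i iA))).
by rewrite exprMn (_ : 2 ^+ 2 = 4 :> R) // expr2 -natrM.
Qed.

End Selection.

Lemma ln2_ge_half (R : realType) : 1 / 2 <= ln (2 : R).
Proof.
have := @le_ln1Dx R (- (1 / 2)); rewrite (_ : 1 + - (1 / 2) = 2^-1); last by field.
by rewrite lnV ?posrE //; lra.
Qed.

Lemma ln_nat_le (R : realType) (a b : nat) : (0 < a)%N -> (a <= b)%N ->
  ln (a%:R : R) <= ln b%:R.
Proof. by move=> a0 ab; rewrite ler_ln ?posrE ?ltr0n ?ler_nat // (leq_trans a0). Qed.

(* K = t + 2 with t = trunc_log 4 n: t <= t ln 4 <= ln n and 2 <= 4 ln 2 <= 4 ln n. *)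
Lemma exists_pow4_log_bound (R : realType) n : (2 <= n)%N ->
  exists K, (4 * n <= 4 ^ K)%N /\ (K%:R : R) <= 6 * ln (n%:R : R).
Proof.
move=> n2; set t := trunc_log 4 n; exists t.+2; split.
  by rewrite (expnS 4 t.+1) leq_mul2l ltnW // trunc_log_ltn.
have ln2 := ln2_ge_half R.
have ln2n : ln 2%:R <= ln (n%:R : R) by apply: ln_nat_le.
have ln4 : ln (4 : R) = 2 * ln 2 by rewrite mulr_natl -lnXn // expr2 -natrM.
have tln : t%:R * (2 * ln 2) <= ln (n%:R : R).
  rewrite mulr_natl -ln4 -lnXn // -natrX.
  by apply: ln_nat_le; rewrite ?expn_gt0 // trunc_logP // (leq_trans _ n2).
have t0 : 0 <= t%:R :> R by [].
rewrite -addn2 natrD; nra.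
Qed.

Lemma isometry_constant_small (R : realType) (e l : R) :
  0 <= e -> e ^+ 2 * l = 9 / 10000 -> 1 / 2 <= l -> e <= 17 / 400.
Proof.
move=> e0 el l2; have : 0 <= e ^+ 2 * (l - 1 / 2) by rewrite mulr_ge0 ?sqr_ge0 ?subr_ge0.
rewrite mulrBr el subr_ge0; nra.
Qed.

Lemma one_sub_sqr_ge (R : realType) (e : R) :
  0 <= e -> e <= 17 / 400 -> 9168 / 10000 <= (1 - e) ^+ 2.
Proof. by move=> e0 e1; have := sqr_ge0 (17 / 400 - e); nra. Qed.

Lemma one_sub_pow4_ge (R : realType) (e : R) :
  0 <= e -> e <= 17 / 400 -> 8405 / 10000 <= (1 - e) ^+ 4.
Proof.
move=> e0 e1; have -> : (1 - e) ^+ 4 = ((1 - e) ^+ 2) ^+ 2 by rewrite -exprM.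
by move: ((1 - e) ^+ 2) (one_sub_sqr_ge e0 e1) => q q_ge; nra.
Qed.

(* The last clause keeps [I :|: supp v] 2n-sparse, so that the RIC applies to [v - y]. *)
Definition romp_invariant (R : realType) N d (Phi : 'M[R]_(N, d)) (v : 'cV[R]_d)
    (I : {set 'I_d}) (r : 'cV[R]_N) : Prop :=
  [/\ exists2 y, supp y \subset I & r = Phi *m (v - y),
      [disjoint supp (Phi^T *m r) & I] &
      (#|I :\: supp v| <= #|I :&: supp v|)%N].

Lemma romp_invariant0 (R : realType) N d (Phi : 'M[R]_(N, d)) (v : 'cV[R]_d) :
  romp_invariant Phi v set0 (Phi *m v).
Proof.
split; last by rewrite set0D cards0.
  by exists 0; [apply/supp_subP => i; rewrite mxE | rewrite subr0].
by rewrite -setI_eq0 setI0.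
Qed.

(* [e] and [lnn] stand for 0.03 / sqrt (ln n) and ln n. *)
Section Iteration.
Variable R : realType.
Variables (N d n K : nat) (Phi : 'M[R]_(N, d)) (v : 'cV[R]_d) (e lnn : R).
Hypotheses (hric : RIC Phi (2 * n) e) (v_sparse : sparse n v).
Hypotheses (e_ge0 : 0 <= e) (e_lnn : e ^+ 2 * lnn = 9 / 10000) (lnn_ge : 1 / 2 <= lnn).
Hypotheses (nK : (4 * n <= 4 ^ K)%N) (K_lnn : K%:R <= 6 * lnn).
Variables (I : {set 'I_d}) (r : 'cV[R]_N) (y : 'cV[R]_d).
Hypotheses (y_supp : supp y \subset I) (r_def : r = Phi *m (v - y)).
Hypotheses (r_orth : [disjoint supp (Phi^T *m r) & I])
  (I_card : (#|I :\: supp v| <= #|I :&: supp v|)%N).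
Variables (J J0 : {set 'I_d}).
Hypotheses (hJ : romp_identify n (Phi^T *m r) J) (hJ0 : romp_regularize (Phi^T *m r) J J0).

Local Notation u := (Phi^T *m r).
Local Notation S := (supp v).
Local Notation v0 := (restrict (supp v :\: I) v).
Local Notation z := (y - restrict (supp v :&: I) v).
Local Notation nu := (norm2 v0).

Let e_small : e <= 17 / 400 := isometry_constant_small e_ge0 e_lnn lnn_ge.
Let e_le1 : e <= 1. Proof. by apply: le_trans e_small _; lra. Qed.
Let lnn_gt0 : 0 < lnn. Proof. by apply: lt_le_trans lnn_ge; lra. Qed.

Let card_setU_supp : (#|I :|: S| <= 2 * n)%N.
Proof.
rewrite cardsU -(cardsID S I) -addnA addKn mul2n -addnn leq_add //.
by apply: leq_trans I_card (leq_trans _ v_sparse); apply/subset_leq_card/subsetIr.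
Qed.

Let supp_z : supp z \subset I.
Proof. by apply: supp_B y_supp (subset_trans (supp_restrict _ _) (subsetIr _ _)). Qed.

Lemma residual_split : r = Phi *m (v0 - z).
Proof.
rewrite r_def; congr (_ *m _); apply/matrixP => i j; rewrite ord1 !mxE !inE.
by have [vi0|vi0] := eqVneq (v i 0) 0; rewrite ?vi0 ?eqxx /=; case: (i \in I) => /=; ring.
Qed.

Lemma dot_v0_u : dot v0 u = dot r r.
Proof.
have zu : dot z u = 0 by apply: dot_supp_disjoint supp_z (subxx _) _; rewrite disjoint_sym.
by rewrite -dot_mulmx -[v0](subrK z) mulmxDr dotDl -residual_split dot_mulmx zu addr0.
Qed.

Lemma residual_norm_ge : (1 - e) ^+ 2 * nu ^+ 2 <= dot r r.
Proof.
have w_sparse : sparse (2 * n) (v0 - z).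
  apply: sparse_subset card_setU_supp; apply: supp_B.
    exact: subset_trans (supp_restrict _ _) (subset_trans (subsetDl _ _) (subsetUr _ _)).
  exact: subset_trans supp_z (subsetUl _ _).
have /andP [lo _] := ric_dot hric e_ge0 e_le1 w_sparse.
rewrite residual_split; apply: le_trans lo; rewrite ler_wpM2l ?sqr_ge0 // norm2_sqr.
have := dot_supp_disjoint (supp_restrict _ _) supp_z (disjoint_setDl _ _).
move: z => w vw; rewrite !(dotDl, dotDr, dotNl, dotNr) (dotC w) vw oppr0 !addr0 add0r opprK.
by rewrite lerDl dot_ge0.
Qed.

Lemma energy_unfound_ge : (1 - e) ^+ 4 * nu ^+ 2 <= energy u (S :\: I).
Proof.
set NT := norm2 (restrict (S :\: I) u).
have cs : dot v0 u <= nu * NT.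
  rewrite (dot_restrictr _ (supp_restrict _ _)); apply: le_trans (dot_le_norm2 _ _).
  exact: ler_norm.
have lo : (1 - e) ^+ 2 * nu <= NT.
  apply: (ler_wpM2l_cancel (norm2_ge0 v0)) => [->|]; first by rewrite mulr0 norm2_ge0.
  by rewrite mulrCA -expr2; apply: le_trans residual_norm_ge _; rewrite -dot_v0_u.
have -> : (1 - e) ^+ 4 = ((1 - e) ^+ 2) ^+ 2 by rewrite -exprM.
rewrite -norm2_restrict -/NT -exprMn ler_sqr ?nnegrE ?norm2_ge0 //.
by rewrite mulr_ge0 ?sqr_ge0 ?norm2_ge0.
Qed.

Lemma energy_J0_ge : 1024 * nu ^+ 2 <= 10000 * lnn * energy u J0.
Proof.
have unfound_n : (#|S :\: I| <= n)%N.
  exact: leq_trans (subset_leq_card (subsetDl _ _)) v_sparse.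
have EJ := identify_energy hJ unfound_n.
have reg := regularize_energy hJ hJ0 nK.
have E0 := energy_ge0 u J0; have nu0 := sqr_ge0 nu.
have e4 : 8405 / 10000 <= (1 - e) ^+ 4 by apply: one_sub_pow4_ge.
have KE : K%:R * energy u J0 <= 6 * lnn * energy u J0 by rewrite ler_wpM2r.
have := energy_unfound_ge; nra.
Qed.

Lemma J0_disjoint_I : [disjoint J0 & I].
Proof.
case: hJ0 hJ => J0J _ [_ [Jsupp _]].
exact: disjointWl (subset_trans J0J Jsupp) r_orth.
Qed.

Lemma norm_Phi_z_le : (1 - e) * norm2 (Phi *m z) <= 2 * e * nu.
Proof.
set zeta := norm2 (Phi *m z).
have z_sparse : sparse (2 * n) z.
  by apply: sparse_subset supp_z (leq_trans (subset_leq_card (subsetUl _ _)) card_setU_supp).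
have /andP [lo _] := ric_dot hric e_ge0 e_le1 z_sparse.
rewrite -!norm2_sqr -!exprMn ler_sqr ?nnegrE ?mulr_ge0 ?subr_ge0 ?norm2_ge0 // in lo.
have zv0 : zeta ^+ 2 <= 2 * e * norm2 z * nu.
  have : dot (Phi *m z) (Phi *m v0) - dot (Phi *m z) (Phi *m z) = 0.
    rewrite -dotNr -dotDr -mulmxBr -residual_split dot_mulmx.
    by apply: dot_supp_disjoint supp_z (subxx _) _; rewrite disjoint_sym.
  move/eqP; rewrite subr_eq0 norm2_sqr => /eqP <-.
  refine (ric_dot_disjoint hric e_ge0 e_le1 supp_z (supp_restrict _ _) _ _).
    by rewrite disjoint_sym disjoint_setDl.
  by apply: leq_trans card_setU_supp; apply/subset_leq_card/setUS/subsetDl.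
apply: (ler_wpM2l_cancel (norm2_ge0 (Phi *m z))) => [z0|].
  by rewrite /zeta z0 mulr0 mulr_ge0 ?mulr_ge0 ?norm2_ge0.
rewrite mulrCA -expr2; apply: le_trans (ler_wpM2l _ zv0) _; first by rewrite subr_ge0.
rewrite [zeta * _]mulrC.
rewrite (_ : (1 - e) * _ = 2 * e * nu * ((1 - e) * norm2 z)); last by ring.
by apply: ler_wpM2l lo; rewrite !mulr_ge0 ?norm2_ge0.
Qed.

Let T_card : (#|J0 :\: S| <= n)%N.
Proof.
case: hJ0 => J0J _; apply: leq_trans (identify_card hJ).
exact/subset_leq_card/(subset_trans (subsetDl _ _) J0J).
Qed.

Lemma norm_off_support_le : (1 - e) * norm2 (restrict (J0 :\: S) u) <= 4 * e * nu.
Proof.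
set T := J0 :\: S; set t := restrict T u; set NT := norm2 t; set zeta := norm2 (Phi *m z).
have t_sparse : sparse (2 * n) t.
  by apply: sparse_subset (supp_restrict _ _) (leq_trans T_card _); rewrite leq_pmull.
have /andP [_ hi] := ric_dot hric e_ge0 e_le1 t_sparse.
rewrite -!norm2_sqr -!exprMn ler_sqr ?nnegrE ?mulr_ge0 ?addr_ge0 ?norm2_ge0 // in hi.
have NT2 : NT ^+ 2 = dot (Phi *m t) (Phi *m v0) - dot (Phi *m t) (Phi *m z).
  rewrite norm2_restrict -dot_restrict -dot_mulmx -/t.
  by rewrite [X in dot _ X]residual_split mulmxBr dotDr dotNr.
have tv0 : dot (Phi *m t) (Phi *m v0) <= 2 * e * NT * nu.
  refine (ric_dot_disjoint hric e_ge0 e_le1 (supp_restrict _ _) (supp_restrict _ _) _ _).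
    exact: disjointWr (subsetDl _ _) (disjoint_setDl _ _).
  apply: leq_trans (leq_card_setU _ _).1 _; rewrite mul2n -addnn leq_add //.
  exact: leq_trans (subset_leq_card (subsetDl _ _)) v_sparse.
have tz : - dot (Phi *m t) (Phi *m z) <= (1 + e) * NT * zeta.
  apply: le_trans (ler_norm _) _; rewrite normrN; apply: le_trans (dot_le_norm2 _ _) _.
  by rewrite ler_wpM2r ?norm2_ge0.
have NTb : NT <= 2 * e * nu + (1 + e) * zeta.
  apply: (ler_wpM2l_cancel (norm2_ge0 t)) => [t0|].
    by rewrite /NT t0 addr_ge0 ?mulr_ge0 ?norm2_ge0 ?addr_ge0.
  rewrite -expr2 NT2 (_ : NT * _ = 2 * e * NT * nu + (1 + e) * NT * zeta); last by ring.
  exact: lerD.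
have e1m : 0 <= 1 - e by rewrite subr_ge0.
have e1p : 0 <= 1 + e by rewrite addr_ge0.
have := ler_wpM2l e1m NTb; have := ler_wpM2l e1p norm_Phi_z_le; rewrite -/zeta; lra.
Qed.

Lemma energy_off_support_le : 5 * energy u (J0 :\: S) <= energy u J0.
Proof.
set ET := energy u (J0 :\: S); set E0 := energy u J0.
have ET0 : 0 <= ET := energy_ge0 _ _; have nu0 := sqr_ge0 nu.
have sq : (1 - e) ^+ 2 * ET <= 16 * e ^+ 2 * nu ^+ 2.
  have := norm_off_support_le; rewrite -ler_sqr ?nnegrE ?mulr_ge0 ?subr_ge0 ?norm2_ge0 //.
  rewrite !exprMn [norm2 (restrict _ u) ^+ 2]norm2_restrict.
  by have -> : (4 : R) ^+ 2 = 16 by rewrite expr2 -natrM.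
have ET_small : (1 - e) ^+ 2 * ET <= 144 / 1024 * E0.
  rewrite -(ler_pM2l lnn_gt0); apply: le_trans (ler_wpM2l (ltW lnn_gt0) sq) _.
  rewrite (_ : lnn * _ = 16 * nu ^+ 2 * (e ^+ 2 * lnn)); last by ring.
  by rewrite e_lnn; have := energy_J0_ge; rewrite -/E0; lra.
have := one_sub_sqr_ge e_ge0 e_small.
move: ((1 - e) ^+ 2) ET_small => q ET_small q_ge; nra.
Qed.

Lemma card_J0_off_support_le : (#|J0 :\: S| <= #|J0 :&: S|)%N.
Proof.
case: hJ0 hJ => J0J [J0cmp _] [_ [Jsupp _]].
apply: (comparable_card_le J0cmp (subsetDl _ _) (subsetIl _ _)).
  exact: subset_trans (subsetDl _ _) (subset_trans J0J Jsupp).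
by have := energy_off_support_le; rewrite [energy u J0](energy_setID u J0 S); lra.
Qed.

Lemma romp_invariant_update I' r' :
  romp_update Phi (Phi *m v) I J0 I' r' -> romp_invariant Phi v I' r'.
Proof.
case=> -> [y' [y'_supp [y'_min ->]]]; split.
- by exists y'; rewrite ?mulmxBr.
- rewrite disjoint_sym disjoints_subset; apply/subsetP => i iI'.
  rewrite !inE negbK -dot_delta -dot_mulmx; apply/eqP.
  apply: least_squares_orthogonal y'_supp y'_min _ _.
  by rewrite (subset_trans (supp_delta _ i)) ?sub1set.
- rewrite setDUl setIUl; apply: leq_trans (leq_card_setU _ _).1 _.
  have IJ0 : [disjoint I :&: S & J0 :&: S].
    by apply: disjointW (subsetIl _ _) (subsetIl _ _) _; rewrite disjoint_sym J0_disjoint_I.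
  by rewrite cardsU (disjoint_setI0 IJ0) cards0 subn0 leq_add ?card_J0_off_support_le.
Qed.

End Iteration.

Lemma romp_reach_invariant (R : realType) N d n K (Phi : 'M[R]_(N, d)) (v : 'cV[R]_d)
    (e lnn : R) :
  RIC Phi (2 * n) e -> sparse n v -> 0 <= e -> e ^+ 2 * lnn = 9 / 10000 -> 1 / 2 <= lnn ->
  (4 * n <= 4 ^ K)%N -> K%:R <= 6 * lnn ->
  forall I r, romp_reach Phi n (Phi *m v) I r -> romp_invariant Phi v I r.
Proof.
move=> hric v_sparse e_ge0 e_lnn lnn_ge nK K_lnn I r.
elim=> [|{}I {}r I' r' _ [[y y_supp r_def] r_orth I_card]]; first exact: romp_invariant0.
case=> _ [J [J0 [hJ [hJ0 hupd]]]].
exact: (romp_invariant_update hric v_sparse e_ge0 e_lnn lnn_ge nK K_lnn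
          y_supp r_def r_orth I_card hJ hJ0 hupd).
Qed.

Theorem lemma3p8 (R : realType) (N d n : nat) (Phi : 'M[R]_(N, d))
    (v : 'cV[R]_d)
    (hRIC : RIC Phi (2 * n)%N ((3%:R / 100%:R) / Num.sqrt (ln (n%:R : R))))
    (hv0 : v != 0) (hvs : sparse n v)
    (I : {set 'I_d}) (r : 'cV[R]_N)
    (hreach : romp_reach Phi n (Phi *m v) I r) (hr0 : r != 0)
    (J J0 : {set 'I_d})
    (hJ : romp_identify n (Phi^T *m r) J)
    (hJ0 : romp_regularize (Phi^T *m r) J J0) :
  norm2 (restrict J0 (Phi^T *m r)) >=
    ((32%:R / 100%:R) / Num.sqrt (ln (n%:R : R))) *
      norm2 (restrict (supp v :\: I) v).
Proof.
have [n2|n_lt2] := leqP 2 n; last first.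
  have -> : ln (n%:R : R) = 0.
    by case: n n_lt2 {hRIC hvs hreach hJ hJ0} => [|[|//]] _; rewrite ?ln1 // ln0.
  by rewrite sqrtr0 invr0 !mulr0 mul0r norm2_ge0.
set lnn := ln (n%:R : R).
have lnn_ge : 1 / 2 <= lnn := le_trans (ln2_ge_half R) (ln_nat_le R (isT : 0 < 2)%N n2).
have lnn_gt0 : 0 < lnn by apply: lt_le_trans lnn_ge; rewrite divr_gt0.
set s := Num.sqrt lnn; have s_gt0 : 0 < s by rewrite sqrtr_gt0.
have s2 : s ^+ 2 = lnn by rewrite sqr_sqrtr ?ltW.
set e := 3%:R / 100%:R / s; have e_ge0 : 0 <= e by rewrite !divr_ge0 ?ltW.
have e_lnn : e ^+ 2 * lnn = 9 / 10000 by rewrite /e -s2; field; rewrite gt_eqF.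
have [K [nK K_lnn]] := exists_pow4_log_bound R n2.
have [[y y_supp r_def] r_orth I_card] :=
  romp_reach_invariant hRIC hvs e_ge0 e_lnn lnn_ge nK K_lnn hreach.
have := energy_J0_ge hRIC hvs e_ge0 e_lnn lnn_ge nK K_lnn y_supp r_def r_orth I_card hJ hJ0.
rewrite norm2_restrict => J0_energy.
rewrite -ler_sqr ?nnegrE ?mulr_ge0 ?divr_ge0 ?invr_ge0 ?sqrtr_ge0 ?norm2_ge0 //.
by rewrite exprMn expr_div_n s2 !norm2_restrict mulrAC ler_pdivrMr //; lra.
Qed.
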